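(* Let $\Gamma=(K_n,\sigma)$ be a signed complete graph and let $\{X_1,\ldots,X_p,X_{p+1},\ldots,X_{p+q}\}$ be a partition of $V(\Gamma)$ into nonempty sets with $|X_i|=n_i$, such that: for every $i\ne j$ all edges between $X_i$ and $X_j$ have the same sign $\epsilon_{ij}\in\{+1,-1\}$; all edges inside $X_i$ are positive for $i=1,\ldots,p$; and all edges inside $X_i$ are negative for $i=p+1,\ldots,p+q$. Let $B=(b_{ij})$ be the $(p+q)\times(p+q)$ quotient matrix, i.e. $b_{ij}$ is the (constant) row sum of the submatrix of $A(\Gamma)$ with rows indexed by $X_i$ and columns by $X_j$ (so $b_{ii}=n_i-1$ for $i\le p$, $b_{ii}=-(n_i-1)$ for $i>p$, and $b_{ij}=\epsilon_{ij}n_j$ for $i\neq j$). If $m_1=\sum_{i=1}^p n_i$ and $m_2=\sum_{i=p+1}^{p+q}n_i$, then $$\varphi(\Gamma,\lambda)=(\lambda+1)^{m_1-p}(\lambda-1)^{m_2-q}\varphi(B,\lambda).$$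
   Context: A signed complete graph $(K_n,\sigma)$ assigns a sign $\pm$ to each edge of $K_n$; its adjacency matrix $A(\Gamma)$ has off-diagonal entries $\sigma(v_iv_j)\in\{1,-1\}$ and zero diagonal. $\varphi(M,\lambda)=\det(\lambda I-M)$ denotes the characteristic polynomial of a matrix $M$, and $\varphi(\Gamma,\lambda)=\varphi(A(\Gamma),\lambda)$. *)

From mathcomp Require Import all_boot all_order all_algebra.
Set Implicit Arguments. Unset Strict Implicit. Unset Printing Implicit Defensive.
Import GRing.Theory Num.Theory.
Local Open Scope ring_scope.

Definition signed_complete (n : nat) (sigma : 'I_n -> 'I_n -> int) : Prop :=
  forall i j : 'I_n, i != j -> sigma i j = sigma j i /\ (sigma i j = 1 \/ sigma i j = -1).

Definition sadj (n : nat) (sigma : 'I_n -> 'I_n -> int) : 'M[int]_n :=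
  \matrix_(i, j) (if i == j then 0 else sigma i j).

Definition phi (n : nat) (M : 'M[int]_n) : {poly int} := char_poly M.

(* Write A(Gamma) = C S C^T - diag(s_(part x)), where C is the characteristic
   matrix of the partition, s_a = +1 or -1 is the sign of the edges inside X_a,
   and S has diagonal s_a and off-diagonal entries eps_ab.  With
   L = diag(lambda + s_(part x)) and D = diag(lambda + s_a), Sylvester's identity
   det(I + XY) = det(I + YX) gives
     det(L - C S C^T) = det L * det(I - S C^T L^-1 C) = det L * det(I - S N D^-1),
   where N = C^T C = diag(n_a), and (I - S N D^-1) D = lambda I - B since
   B = S N - diag(s_a).  Hence
     phi(Gamma) * prod_a (lambda + s_a) = prod_a (lambda + s_a)^(n_a) * phi(B).
   The computation takes place in the fraction field of Z[lambda]. *)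

From mathcomp Require Import all_boot all_order all_algebra.
Set Implicit Arguments. Unset Strict Implicit. Unset Printing Implicit Defensive.
Import GRing.Theory Num.Theory.
Local Open Scope ring_scope.

Lemma sylvester_det (R : comNzRingType) n m (X : 'M[R]_(n, m)) (Y : 'M[R]_(m, n)) :
  \det (1%:M + X *m Y) = \det (1%:M + Y *m X).
Proof.
have elim_low : block_mx 1%:M 0 Y 1%:M *m block_mx 1%:M (- X) 0 (1%:M + Y *m X)
    = block_mx 1%:M (- X) Y 1%:M.
  by rewrite mulmx_block !(mul1mx, mulmx1, mul0mx, mulmx0, addr0, add0r)
    mulmxN (addrC 1%:M) addKr.
have elim_up : block_mx (1%:M + X *m Y) (- X) 0 1%:M *m block_mx 1%:M 0 Y 1%:M
    = block_mx 1%:M (- X) Y 1%:M.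
  by rewrite mulmx_block !(mulmx1, mulmx0, mul0mx, mul1mx, addr0, add0r)
    mulNmx addrK.
have := congr1 determinant (etrans elim_low (esym elim_up)).
by rewrite !det_mulmx !det_ublock !det_lblock !det1 !mul1r !mulr1 => ->.
Qed.

Lemma det_diag_row (R : comNzRingType) k (d : 'I_k -> R) :
  \det (diag_mx (\row_i d i)) = \prod_i d i.
Proof. by rewrite det_diag; under eq_bigr do rewrite mxE. Qed.

Lemma char_poly_sub_diag (R : comNzRingType) k (M : 'M[R]_k) (s : 'I_k -> R) :
  char_poly (M - diag_mx (\row_i s i)) =
  \det (diag_mx (\row_i ('X + (s i)%:P)) - map_mx polyC M).
Proof.
rewrite /char_poly /char_poly_mx; congr (\det _); apply/matrixP => i j; rewrite !mxE.
by rewrite polyCB polyCMn opprB mulrnDl addrA.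
Qed.

Section PartitionMatrices.
Variables (n m : nat) (part : 'I_n -> 'I_m).

Definition part_size (a : 'I_m) : nat := #|[set x | part x == a]|.

(* The characteristic matrix of the partition: its (x, a) entry is [part x == a]. *)
Local Notation part_mx := (rowsub part 1%:M).
Local Notation part_size_mx := (diag_mx (\row_a (part_size a)%:R)).

Definition part_blowup (R : nzRingType) (S : 'M[R]_m) (s : 'I_m -> R) : 'M[R]_n :=
  mxsub part part S - diag_mx (\row_x s (part x)).

Definition part_quotient (R : nzRingType) (S : 'M[R]_m) (s : 'I_m -> R) : 'M[R]_m :=
  S *m part_size_mx - diag_mx (\row_a s a).

Lemma prodr_part (R : comNzRingType) (F : 'I_m -> R) :
  \prod_x F (part x) = \prod_a F a ^+ part_size a.
Proof.
rewrite (partition_big part xpredT) //=; apply: eq_bigr => a _.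
rewrite -prodr_const /part_size; apply: eq_big => [x|x /eqP -> //].
by rewrite inE.
Qed.

Lemma map_part_size_mx (R R' : nzRingType) (f : {rmorphism R -> R'}) :
  map_mx f part_size_mx = part_size_mx.
Proof.
by rewrite map_diag_mx; congr diag_mx; apply/rowP => a; rewrite !mxE rmorph_nat.
Qed.

Section CommutativeRing.
Variable R : comNzRingType.
Implicit Types (S : 'M[R]_m) (d s : 'I_m -> R).

Lemma part_mx_conj S : part_mx *m S *m part_mx^T = mxsub part part S.
Proof. by rewrite -rowsubE trmx_mxsub trmx1 mulmx_colsub mulmx1 -mxsubcr. Qed.

Lemma diag_part_mx d :
  diag_mx (\row_x d (part x)) *m part_mx = part_mx *m diag_mx (\row_a d a).
Proof.
rewrite -rowsubE mul_diag_mx; apply/matrixP => x a; rewrite !mxE.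
by case: eqP => [->|]; rewrite ?mulr1 ?mulr0.
Qed.

Lemma trmx_part_mx_mul : part_mx^T *m part_mx = part_size_mx :> 'M[R]_m.
Proof.
apply/matrixP => a b; rewrite !mxE.
under eq_bigr do rewrite !mxE -natrM mulnb.
case: (eqVneq a b) => [<-|neq_ab].
  under eq_bigr do rewrite andbb.
  rewrite mulr1n /part_size -sumr_const [RHS]big_mkcond.
  by apply: eq_bigr => x _; rewrite inE; case: eqP.
rewrite mulr0n big1 // => x _.
by case: (part x =P a) => //= ->; rewrite (negPf neq_ab).
Qed.

Lemma part_blowup_equitable S s :
  part_blowup S s *m part_mx = part_mx *m part_quotient S s.
Proof.
rewrite /part_blowup /part_quotient -part_mx_conj mulmxBl -!mulmxA trmx_part_mx_mul.
by rewrite diag_part_mx mulmxBr mulmxA.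
Qed.

Lemma sum_part_mx k (A : 'M[R]_(k, n)) i b :
  \sum_(y | part y == b) A i y = (A *m part_mx) i b.
Proof.
rewrite !mxE big_mkcond; apply: eq_bigr => y _; rewrite !mxE.
by case: eqP; rewrite ?mulr1 ?mulr0.
Qed.

End CommutativeRing.

Lemma det_part_quotient_field (K : fieldType) (S : 'M[K]_m) (d : 'I_m -> K) :
    (forall a, d a != 0) ->
  \det (diag_mx (\row_x d (part x)) - part_mx *m S *m part_mx^T) * \prod_a d a =
  \prod_x d (part x) * \det (diag_mx (\row_a d a) - S *m part_size_mx).
Proof.
move=> d_neq0; rewrite -!det_diag_row.
set L := diag_mx (\row_x d (part x)); set D := diag_mx (\row_a d a).
pose Li := diag_mx (\row_x (d (part x))^-1); pose Di := diag_mx (\row_a (d a)^-1).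
have LLi : L *m Li = 1%:M.
  rewrite mulmx_diag -diag_const_mx; congr diag_mx.
  by apply/rowP => x; rewrite !mxE divff.
have DiD : Di *m D = 1%:M.
  rewrite mulmx_diag -diag_const_mx; congr diag_mx.
  by apply/rowP => a; rewrite !mxE mulVf.
have -> : L - part_mx *m S *m part_mx^T =
          L *m (1%:M + (Li *m part_mx) *m - (S *m part_mx^T)).
  by rewrite mulmxDr mulmx1 !mulmxA LLi mul1mx mulmxN mulmxA.
rewrite det_mulmx sylvester_det (diag_part_mx (fun a => (d a)^-1)) -/Di.
rewrite mulNmx !mulmxA -(mulmxA _ part_mx^T) trmx_part_mx_mul.
rewrite -mulrA -det_mulmx mulmxDl mulNmx mul1mx.
by rewrite -[_ *m D]mulmxA DiD mulmx1.
Qed.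

Lemma det_part_quotient (R : idomainType) (S : 'M[R]_m) (d : 'I_m -> R) :
    (forall a, d a != 0) ->
  \det (diag_mx (\row_x d (part x)) - part_mx *m S *m part_mx^T) * \prod_a d a =
  \prod_x d (part x) * \det (diag_mx (\row_a d a) - S *m part_size_mx).
Proof.
move=> d_neq0; apply/eqP; rewrite -tofrac_eq; apply/eqP.
rewrite !rmorphM !rmorph_prod /= -!det_map_mx !map_mxB !map_mxM map_part_size_mx.
have map_row k (e : 'I_k -> R) :
    map_mx (@tofrac R) (\row_i e i) = \row_i tofrac (e i).
  by apply/rowP => i; rewrite !mxE.
rewrite !map_diag_mx !map_row -map_trmx map_mxsub map_mx1.
apply: (det_part_quotient_field _ (d := fun a => tofrac (d a))) => a.
by rewrite tofrac_eq0.
Qed.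

Lemma char_poly_part_blowup (R : idomainType) (S : 'M[R]_m) (s : 'I_m -> R) :
  char_poly (part_blowup S s) * \prod_a ('X + (s a)%:P) =
  \prod_x ('X + (s (part x))%:P) * char_poly (part_quotient S s).
Proof.
rewrite !char_poly_sub_diag -part_mx_conj !map_mxM -map_trmx map_mxsub map_mx1.
rewrite map_part_size_mx.
apply: (det_part_quotient _ (d := fun a => 'X + (s a)%:P)) => a.
exact/monic_neq0/monicXaddC.
Qed.

End PartitionMatrices.

Lemma sumn_subn1 k (g : 'I_k -> nat) :
  (forall i, 0 < g i)%N -> (\sum_i (g i - 1) = \sum_i g i - k)%N.
Proof. by move=> g_gt0; rewrite sumnB // sum1_card card_ord. Qed.

Section SignedCompleteQuotient.
Variables (n p q : nat) (sigma : 'I_n -> 'I_n -> int).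
Variables (part : 'I_n -> 'I_(p + q)).
Variables (eps : 'I_(p + q) -> 'I_(p + q) -> int) (B : 'M[int]_(p + q)).

Hypothesis part_surj : forall a, exists x, part x = a.
Hypothesis sigma_between :
  forall x y, part x != part y -> sigma x y = eps (part x) (part y).
Hypothesis sigma_pos :
  forall x y, x != y -> part x = part y -> (val (part x) < p)%N -> sigma x y = 1.
Hypothesis sigma_neg :
  forall x y, x != y -> part x = part y -> (p <= val (part x))%N -> sigma x y = -1.
Hypothesis B_row_sums : forall a b x, part x = a ->
  B a b = \sum_(j < n | part j == b) sadj sigma x j.

Definition part_sign (a : 'I_(p + q)) : int := if (val a < p)%N then 1 else -1.

Definition sign_mx : 'M[int]_(p + q) :=
  \matrix_(a, b) (if a == b then part_sign a else eps a b).

Lemma sadj_part_blowup : sadj sigma = part_blowup part sign_mx part_sign.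
Proof.
apply/matrixP => x y; rewrite !mxE.
case: (eqVneq x y) => [->|neq_xy]; first by rewrite eqxx mulr1n subrr.
rewrite mulr0n subr0.
case: (eqVneq (part x) (part y)) => [eq_part|]; last exact: sigma_between.
rewrite /part_sign; case: ltnP => part_x_p.
  exact: sigma_pos.
exact: sigma_neg.
Qed.

Lemma B_part_quotient : B = part_quotient part sign_mx part_sign.
Proof.
apply/matrixP => a b; have [x <-] := part_surj a.
rewrite (B_row_sums b (erefl _)) sum_part_mx sadj_part_blowup.
by rewrite part_blowup_equitable -rowsubE mxE.
Qed.

Lemma prod_part_sign :
  \prod_x ('X + (part_sign (part x))%:P) =
  ('X + 1) ^+ (\sum_(a < p + q | (val a < p)%N) part_size part a - p) *
  ('X - 1) ^+ (\sum_(a < p + q | (p <= val a)%N) part_size part a - q) *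
  \prod_a ('X + (part_sign a)%:P).
Proof.
have size_gt0 a : (0 < part_size part a)%N.
  by have [x <-] := part_surj a; apply/card_gt0P; exists x; rewrite inE.
rewrite (prodr_part _ (fun a => 'X + (part_sign a)%:P)).
under eq_bigr do rewrite -(prednK (size_gt0 _)) exprS mulrC -subn1.
rewrite big_split /=; congr (_ * _).
rewrite big_split_ord /=.
under eq_bigr do rewrite /part_sign /= ltn_ord polyC1.
under [X in _ * X]eq_bigr do
  rewrite /part_sign /= ltnNge leq_addr /= polyCN polyC1.
rewrite !prodrXr !sumn_subn1 //; congr (_ ^+ (_ - _) * _ ^+ (_ - _));
  rewrite big_split_ord /=.
- rewrite [X in _ = (_ + X)%N]big_pred0 ?addn0 => [|i].
    by apply: eq_bigl => i; rewrite /= ltn_ord.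
  by rewrite /= ltnNge leq_addr.
- rewrite [X in _ = (X + _)%N]big_pred0 ?add0n => [|i].
    by apply: eq_bigl => i; rewrite /= leq_addr.
  by rewrite /= leqNgt ltn_ord.
Qed.
End SignedCompleteQuotient.

Theorem theorem3p2 (n p q : nat) (sigma : 'I_n -> 'I_n -> int)
  (part : 'I_n -> 'I_(p + q))
  (eps : 'I_(p + q) -> 'I_(p + q) -> int)
  (B : 'M[int]_(p + q)) :
  signed_complete sigma ->
  (* the parts X_a = part^-1(a) are nonempty *)
  (forall a : 'I_(p + q), exists x : 'I_n, part x = a) ->
  (* edges between distinct parts X_a, X_b have the common sign eps a b *)
  (forall a b : 'I_(p + q), a != b -> eps a b = 1 \/ eps a b = -1) ->
  (forall x y : 'I_n, part x != part y -> sigma x y = eps (part x) (part y)) ->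
  (* edges inside X_a are positive for a < p, negative for a >= p *)
  (forall x y : 'I_n, x != y -> part x = part y -> (val (part x) < p)%N -> sigma x y = 1) ->
  (forall x y : 'I_n, x != y -> part x = part y -> (p <= val (part x))%N -> sigma x y = -1) ->
  (* B is the quotient matrix: b_ab is the row sum of the block X_a x X_b *)
  (forall (a b : 'I_(p + q)) (x : 'I_n), part x = a ->
      B a b = \sum_(j < n | part j == b) sadj sigma x j) ->
  let size_part := fun a : 'I_(p + q) => #|[set x | part x == a]| in
  let m1 := (\sum_(a < p + q | (val a < p)%N) size_part a)%N in
  let m2 := (\sum_(a < p + q | (p <= val a)%N) size_part a)%N in
  phi (sadj sigma) =
    ('X + 1) ^+ (m1 - p) * ('X - 1) ^+ (m2 - q) * phi B.
Proof.
move=> _ part_surj _ sigma_between sigma_pos sigma_neg B_row_sums size_part m1 m2.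
have prod_neq0 : \prod_a ('X + (@part_sign p q a)%:P) != 0 :> {poly int}.
  by apply/prodf_neq0 => a _; exact/monic_neq0/monicXaddC.
apply: (mulIf prod_neq0).
rewrite /phi (sadj_part_blowup sigma_between sigma_pos sigma_neg).
rewrite char_poly_part_blowup (prod_part_sign part_surj).
rewrite -(B_part_quotient part_surj sigma_between sigma_pos sigma_neg B_row_sums).
by rewrite mulrAC.
Qed.
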